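(* Let $\Lambda_i\in\mathcal H_I$, $i\in[n]$, $\mathbb P$ atomless, and $Y\ge0$ a random variable with $1<\mathbb E^{\mathbb P}(Y)<\infty$. If $\overline\Lambda^*$ is attainable, then for all $X\in\mathcal X$ $$\mathop{\square}_{i=1}^n\sup_{\mathbb Q\in\mathcal P(\mathbb P,0,Y)}\Lambda_i\mathrm{VaR}^{\mathbb Q}(X)=\inf\{x\in\mathbb R:\mathbb E^{\mathbb P}(Y\mathds 1_{\{X>x\}})\le\overline\Lambda^*(x)\}.$$ If moreover the right-hand side equals a finite value $x^*$ and $\overline\Lambda^*$ is right-continuous at $x^*$, then an optimal allocation is $X_i=(X-x^* )\mathds 1_{A_i^*}+y_i^*$, where $(y_1^*,\dots,y_n^* )$ satisfies $\sum_iy_i^*=x^*$ and $\sum_i\Lambda_i(y_i^* )=\overline\Lambda^*(x^* )$, and $(A_1^*,\dots,A_n^* )\in\Pi_n(\Omega)$ satisfies $\mathbb E^{\mathbb P}(Y\mathds 1_{\{X>x^*\}\cap A_i^*})\le\Lambda_i(y_i^* )$ for all $i$ (such objects exist).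
   Context: $\Lambda\mathrm{VaR}^{\mathbb Q}(X)=\inf\{x\in\mathbb R:\mathbb Q(X>x)\le\Lambda(x)\}$; $\mathcal H_I$: increasing functions $\mathbb R\to(0,1)$. $\mathcal P(\mathbb P,0,Y)=\{\mathbb Q\ll\mathbb P: 0\le\mathrm d\mathbb Q/\mathrm d\mathbb P\le Y\}$. $\overline\Lambda^*(x)=\sup_{y_1+\dots+y_n=x}\sum_{i=1}^n\Lambda_i(y_i)$; it is attainable if for each $x\in\mathbb R$ the supremum is attained by some $(y_1,\dots,y_n)$ with $\sum_iy_i=x$. Inf-convolution $\mathop{\square}_i\rho_i(X)=\inf\{\sum_i\rho_i(X_i):X_i\in\mathcal X,\sum_iX_i=X\}$, $\mathcal X$ a set of real-valued random variables containing constants, closed under sums, differences, multiplication by indicators. $\Pi_n(\Omega)$: measurable partitions into $n$ sets. *)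

From mathcomp Require Import all_boot all_order all_algebra.
From mathcomp Require Import all_classical all_reals all_analysis.
Set Implicit Arguments. Unset Strict Implicit. Unset Printing Implicit Defensive.
Import Order.TTheory GRing.Theory Num.Theory.
Import numFieldNormedType.Exports.
Local Open Scope classical_set_scope.
Local Open Scope ring_scope.

Section Defs.
Context {d : measure_display} {T : measurableType d} {R : realType}.

Definition HI (L : R -> R) : Prop :=
  {homo L : x y / x <= y} /\ (forall x, 0 < L x < 1).

Definition atomless (P : probability T R) : Prop :=
  forall A, measurable A -> (0 < P A)%E ->
    exists B, [/\ measurable B, B `<=` A & (0 < P B < P A)%E].

(* P(P,0,Y): probability measures Q << P with 0 <= dQ/dP <= Y *)
Definition PY (P : probability T R) (Y : T -> R) : set (probability T R) :=
  [set Q : probability T R | exists f : T -> R,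
    [/\ measurable_fun setT f, (forall w, 0 <= f w <= Y w) &
        forall A, measurable A -> (Q A = \int[P]_(w in A) (f w)%:E)%E]].

Definition LVaR (L : R -> R) (Q : probability T R) (X : T -> R) : \bar R :=
  ereal_inf [set x%:E | x in [set x : R | (Q [set w | (x < X w)%R] <= (L x)%:E)%E]].

Definition rhoY (L : R -> R) (P : probability T R) (Y : T -> R) (X : T -> R)
  : \bar R := ereal_sup [set LVaR L Q X | Q in PY P Y].

Definition admissible_class (Xs : set (T -> R)) : Prop :=
  [/\ (forall X, Xs X -> measurable_fun setT X),
      (forall c : R, Xs (cst c)),
      (forall X Z, Xs X -> Xs Z -> Xs (X \+ Z)),
      (forall X Z, Xs X -> Xs Z -> Xs (X \- Z)) &
      (forall X A, Xs X -> measurable A -> Xs (X \* \1_A))].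

Definition allocation (Xs : set (T -> R)) (n : nat) (X : T -> R)
  (Xi : 'I_n -> T -> R) : Prop :=
  (forall i, Xs (Xi i)) /\ (forall w, \sum_(i < n) Xi i w = X w).

Definition infconv (Xs : set (T -> R)) (n : nat)
  (rho : 'I_n -> (T -> R) -> \bar R) (X : T -> R) : \bar R :=
  ereal_inf [set (\sum_(i < n) rho i (Xi i))%E | Xi in allocation Xs X].

Definition optimal_allocation (Xs : set (T -> R)) (n : nat)
  (rho : 'I_n -> (T -> R) -> \bar R) (X : T -> R) (Xi : 'I_n -> T -> R) : Prop :=
  allocation Xs X Xi /\ (\sum_(i < n) rho i (Xi i))%E = infconv Xs rho X.

Definition partition_n (n : nat) (A : 'I_n -> set T) : Prop :=
  [/\ (forall i, measurable (A i)),
      (forall i j, i != j -> A i `&` A j = set0) &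
      \bigcup_(i in [set: 'I_n]) A i = setT].

Definition rhsVaR (P : probability T R) (Y X : T -> R) (Lb : R -> R) : \bar R :=
  ereal_inf [set x%:E | x in [set x : R |
     (\int[P]_(w in [set w | (x < X w)%R]) (Y w)%:E <= (Lb x)%:E)%E]].

End Defs.

Definition Lbar {R : realType} (n : nat) (L : 'I_n -> R -> R) (x : R) : R :=
  sup [set s : R | exists y : 'I_n -> R,
         \sum_(i < n) y i = x /\ s = \sum_(i < n) L i (y i)].

Definition attainable {R : realType} (n : nat) (L : 'I_n -> R -> R) : Prop :=
  forall x : R, exists y : 'I_n -> R,
    \sum_(i < n) y i = x /\ \sum_(i < n) L i (y i) = Lbar L x.

(* Let nu be the measure with density Y with respect to P. Every Q in
   P(P,0,Y) satisfies Q <= nu, and since nu(Omega) > 1, every mass below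
   min(1, nu(B)) is exceeded by Q(B) for some such Q. Hence rho(X) < t forces
   nu(X > t) <= L(t), which by a union bound over the pieces of an allocation
   gives the lower bound for the inf-convolution; conversely
   nu({X > x} /\ A) <= L(y) gives rho((X - x) 1_A + y) <= y. For the upper
   bound, attainability writes Lbar(x) as sum_i L_i(y_i), and since nu is
   atomless (because P is), {X > x} can be cut into pieces of nu-mass at most
   L_i(y_i). At x* right-continuity shows that the infimum on the right-hand
   side is attained, so the same cut is an optimal allocation. *)

From HB Require Import structures.
From mathcomp Require Import all_boot all_order all_algebra.
From mathcomp Require Import all_classical all_reals all_analysis.
From mathcomp Require Import measurable_realfun.
From mathcomp Require Import lra.
Set Implicit Arguments. Unset Strict Implicit. Unset Printing Implicit Defensive.
Import Order.TTheory GRing.Theory Num.Theory Num.Def.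
Import numFieldNormedType.Exports.
Local Open Scope classical_set_scope.
Local Open Scope ring_scope.

Lemma measurable_superlevel d (T : measurableType d) (R : realType)
    (f : T -> R) (x : R) :
  measurable_fun setT f -> measurable [set w | x < f w].
Proof.
move=> mf; rewrite -preimage_itvoy -[_ @^-1` _]setTI.
by apply: mf => //; exact: measurable_itv.
Qed.

Lemma nondecreasing_bigcup_le d (T : measurableType d) (R : realType)
    (m : {measure set T -> \bar R}) (F : nat -> set T) (c : \bar R) :
  (forall k, measurable (F k)) -> nondecreasing_seq F ->
  (forall k, m (F k) <= c)%E -> (m (\bigcup_k F k) <= c)%E.
Proof.
move=> mF incF Fc.
have cvF := @nondecreasing_cvg_mu _ _ _ m _ mF
  (bigcup_measurable (fun k _ => mF k)) incF.
rewrite -(cvg_lim _ cvF)//; apply: lime_le; first exact: cvgP cvF.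
exact: nearW.
Qed.

Lemma sum_indic_partition d (T : measurableType d) (R : realType) n
    (A : 'I_n -> set T) w :
  partition_n A -> \sum_(i < n) \1_(A i) w = 1 :> R.
Proof.
move=> [_ A_disj A_cover].
have [j _ Ajw] : (\bigcup_(i in [set: 'I_n]) A i) w by rewrite A_cover.
rewrite (bigD1 j)//= indicE mem_set// big1 ?addr0// => i ij.
rewrite indicE memNset// => Aiw.
by have : (A i `&` A j) w by []; rewrite A_disj.
Qed.

Lemma measureDI_sub d (T : measurableType d) (R : realType)
    (m : {measure set T -> \bar R}) A B :
  measurable A -> measurable B -> B `<=` A -> m A = (m (A `\` B) + m B)%E.
Proof. by move=> mA mB BA; rewrite -[in m B](setIidr BA); exact: measureDI. Qed.

Lemma measure_le_sum_cover d (T : measurableType d) (R : realType)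
    (m : {measure set T -> \bar R}) n (A : set T) (F : 'I_n -> set T) :
  measurable A -> (forall i, measurable (F i)) ->
  A `<=` \bigcup_i F i -> (m A <= \sum_(i < n) m (F i))%E.
Proof.
move=> mA mF AF; pose G k := if insub k is Some i then F i else set0.
have -> : (\sum_(i < n) m (F i) = \sum_(i < n) m (G i))%E.
  by apply: eq_bigr => i _; rewrite /G valK.
apply: content_subadditive => //.
  by move=> k _; rewrite /G; case: insubP.
move=> w /AF [i _ Fiw]; rewrite -bigcup_mkord.
by exists i => //=; rewrite /G valK.
Qed.

Definition atomless_measure d (T : measurableType d) (R : realType)
    (m : set T -> \bar R) :=
  forall A, measurable A -> (0 < m A)%E ->
    exists B, [/\ measurable B, B `<=` A & (0 < m B < m A)%E].

Section finite_measure.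
Context d (T : measurableType d) (R : realType) (m : {measure set T -> \bar R}).
Hypothesis m_fin : (m setT < +oo)%E.

Definition fmeasure (A : set T) : R := fine (m A).
Local Notation mr := fmeasure.

Lemma fmeasureE A : measurable A -> m A = (mr A)%:E.
Proof.
move=> mA; rewrite fineK// ge0_fin_numE// (le_lt_trans _ m_fin)//.
by rewrite le_measure ?inE.
Qed.

Lemma fmeasure_ge0 A : 0 <= mr A.
Proof. by rewrite fine_ge0. Qed.

Lemma fmeasure0 : mr set0 = 0.
Proof. by rewrite /fmeasure measure0. Qed.

Lemma le_fmeasure A B :
  measurable A -> measurable B -> A `<=` B -> mr A <= mr B.
Proof.
by move=> mA mB AB; rewrite -lee_fin -!fmeasureE// le_measure ?inE.
Qed.

Lemma fmeasureDI A B : measurable A -> measurable B ->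
  mr A = mr (A `\` B) + mr (A `&` B).
Proof.
move=> mA mB; apply: EFin_inj.
by rewrite EFinD -!fmeasureE//;
  [exact: measureDI|exact: measurableI|exact: measurableD].
Qed.

Lemma fmeasureU A B : measurable A -> measurable B -> A `&` B = set0 ->
  mr (A `|` B) = mr A + mr B.
Proof.
move=> mA mB AB0; apply: EFin_inj.
by rewrite EFinD -!fmeasureE//; [exact: measureU|exact: measurableU].
Qed.

Lemma fmeasureD A B : measurable A -> measurable B -> B `<=` A ->
  mr (A `\` B) = mr A - mr B.
Proof. by move=> mA mB BA; rewrite (fmeasureDI mA mB) (setIidr BA); lra. Qed.

Section atomless.
Hypothesis m_atomless : atomless_measure m.

Let atomless_fmeasure A : measurable A -> 0 < mr A ->
  exists B, [/\ measurable B, B `<=` A & 0 < mr B < mr A].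
Proof.
move=> mA; rewrite -lte_fin -fmeasureE// => /(m_atomless mA) [B [mB BA]].
by rewrite !fmeasureE// !lte_fin; exists B.
Qed.

Let atomless_halving A : measurable A -> 0 < mr A ->
  exists B, [/\ measurable B, B `<=` A, 0 < mr B & mr B * 2 <= mr A].
Proof.
move=> mA A_gt0.
have [B [mB BA /andP[B_gt0 BA_lt]]] := atomless_fmeasure mA A_gt0.
have [|BA_gt] := leP (mr B * 2) (mr A); first by exists B.
(* one of B and A \ B carries at most half of the mass of A *)
exists (A `\` B); rewrite fmeasureD//.
by split; [exact: measurableD|exact: subDsetl|lra|lra].
Qed.

Lemma atomless_small_subset A e : measurable A -> 0 < mr A -> 0 < e ->
  exists B, [/\ measurable B, B `<=` A, 0 < mr B & mr B < e].
Proof.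
move=> mA A_gt0 e_gt0.
have halving k : exists B,
    [/\ measurable B, B `<=` A, 0 < mr B & mr B * 2 ^+ k <= mr A].
  elim: k => [|k [B [mB BA B_gt0 Bk]]].
    by exists A; rewrite expr0 mulr1; split.
  have [C [mC CB C_gt0 C2]] := atomless_halving mB B_gt0.
  exists C; split => //; first exact: subset_trans CB BA.
  by rewrite exprS mulrA (le_trans _ Bk)// ler_wpM2r// exprn_ge0.
pose k := truncn (mr A / e).
have [B [mB BA B_gt0 Bk]] := halving k.+1.
exists B; split => //; rewrite -(@ltr_pM2r _ (2 ^+ k.+1)) ?exprn_gt0//.
apply: le_lt_trans Bk _; rewrite -ltr_pdivrMl// mulrC.
apply: lt_le_trans (truncnS_gt _) _.
by rewrite -natrX ler_nat ltnW// ltn_expl.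
Qed.

Section intermediate_value.
Variables (S : set T) (a : R).
Hypotheses (mS : measurable S) (a_ge0 : 0 <= a) (a_le : a <= mr S).

Let fits B D := [/\ measurable D, D `<=` S `\` B & mr B + mr D <= a].

Let greedy_choice B : exists D, measurable B -> mr B <= a ->
  fits B D /\ forall D', fits B D' -> mr D' <= 2 * mr D.
Proof.
have [[mB Ba]|] := pselect (measurable B /\ mr B <= a); last first.
  by move=> hB; exists set0 => mB Ba; exfalso; apply: hB.
pose E := [set mr D' | D' in fits B].
have E0 : E 0.
  by exists set0; [split=> //; rewrite fmeasure0 addr0|exact: fmeasure0].
have E_sup : has_sup E.
  by split; [exists 0|exists (a - mr B) => _ [D' [_ _ ?] <-]; lra].
have [E_sup0|E_sup_gt0] := eqVneq (sup E) 0.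
  exists set0 => _ _; split; first by split=> //; rewrite fmeasure0 addr0.
  move=> D' D'_fits; rewrite fmeasure0 mulr0 -E_sup0.
  by apply: sup_upper_bound => //; exists D'.
have sup_gt0 : 0 < sup E.
  by rewrite lt_neqAle eq_sym E_sup_gt0; exact: sup_upper_bound.
have [_ [D D_fits <-] DE] := sup_adherent (divr_gt0 sup_gt0 (ltr0n _ 2)) E_sup.
exists D => _ _; split => // D' D'_fits.
have : mr D' <= sup E by apply: sup_upper_bound => //; exists D'.
lra.
Qed.

Let greedy B := projT1 (cid (greedy_choice B)).

Let greedyP B : measurable B -> mr B <= a ->
  fits B (greedy B) /\ forall D', fits B D' -> mr D' <= 2 * mr (greedy B).
Proof. exact: projT2 (cid (greedy_choice B)). Qed.

Let G k := iter k (fun B => B `|` greedy B) set0.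

Let G_inv k : [/\ measurable (G k), G k `<=` S & mr (G k) <= a].
Proof.
elim: k => [|k [mG GS Ga]]; first by rewrite /= fmeasure0; split.
have [[mD DS Da] _] := greedyP mG Ga.
split => /=; first exact: measurableU.
  by move=> w [/GS|/DS []].
by rewrite fmeasureU//; apply/seteqP; split => // w [Gw /DS []].
Qed.

Let G_succ k : mr (G k.+1) = mr (G k) + mr (greedy (G k)).
Proof.
have [mG _ Ga] := G_inv k; have [[mD DS _] _] := greedyP mG Ga.
by rewrite /= fmeasureU//; apply/seteqP; split => // w [Gw /DS []].
Qed.

Let G_nondecreasing : nondecreasing_seq G.
Proof.
move=> i j; elim: j => [|j IH]; first by rewrite leqn0 => /eqP ->.
rewrite leq_eqVlt => /orP[/eqP -> //|]; rewrite ltnS => /IH.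
by rewrite !subsetEset => ij w /ij Gw; left.
Qed.

Lemma atomless_ivt : exists B, [/\ measurable B, B `<=` S & mr B = a].
Proof.
have mG k : measurable (G k) by case: (G_inv k).
pose B := \bigcup_k G k.
have mB : measurable B := bigcup_measurable (fun k _ => mG k).
have GB k : G k `<=` B by move=> w Gw; exists k.
have Ba : mr B <= a.
  rewrite -lee_fin -fmeasureE//; apply: nondecreasing_bigcup_le => // k.
  by rewrite fmeasureE// lee_fin; case: (G_inv k).
have BS : B `<=` S by move=> w [k _]; case: (G_inv k) => _ + _; apply.
clearbody B; exists B; split => //.
apply/eqP; rewrite eq_le Ba /= leNgt; apply/negP => B_lt.
have [D [mD DSB D_gt0 D_lt]] : exists D, [/\ measurable D, D `<=` S `\` B,
    0 < mr D & mr D < a - mr B].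
  apply: atomless_small_subset; [exact: measurableD| |lra].
  by rewrite fmeasureD// subr_gt0 (lt_le_trans B_lt a_le).
(* D always fits, so every greedy step adds at least mr D / 2 *)
have D_fits k : fits (G k) D.
  split => //; first by move=> w /DSB [Sw Bw]; split => // /GB.
  have := le_fmeasure (mG k) mB (GB k); lra.
have G_grows k : k%:R * mr D / 2 <= mr (G k).
  elim: k => [|k IH]; first by rewrite !mul0r fmeasure_ge0.
  have [mG' _ Ga] := G_inv k; have := (greedyP mG' Ga).2 _ (D_fits k).
  rewrite G_succ -[k.+1]addn1 natrD mulrDl mul1r; move: IH; lra.
pose k := truncn (2 * a / mr D).
have : 2 * a < k.+1%:R * mr D by rewrite -ltr_pdivrMr//; exact: truncnS_gt.
have := G_grows k.+1; have [_ _ Ga] := G_inv k.+1.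
lra.
Qed.

End intermediate_value.

(* Carve a piece of mass min (c 0) (mr (C `&` S)) out of C `&` S, then recurse
   on the rest of S. *)
Let atomless_split_nat C k (c : nat -> R) S : measurable C -> measurable S ->
  (forall i, 0 <= c i) -> mr (C `&` S) <= \sum_(i < k.+1) c i ->
  exists A : nat -> set T,
    [/\ (forall i, measurable (A i)), (forall i, A i `<=` S),
     (forall i j, (i <= k)%N -> (j <= k)%N -> i != j -> A i `&` A j = set0),
     (forall w, S w -> exists2 i, (i <= k)%N & A i w) &
     (forall i, (i <= k)%N -> mr (C `&` A i) <= c i)].
Proof.
move=> mC; elim: k c S => [|k IH] c S mS c_ge0 CS_le.
  exists (fun=> S); split => //; first by move=> i.
  - by move=> i j; rewrite !leqn0 => /eqP-> /eqP->; rewrite eqxx.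
  - by move=> w Sw; exists 0%N.
  - by move=> i; rewrite leqn0 => /eqP->; rewrite big_ord1 in CS_le.
rewrite big_ord_recl /= in CS_le.
have mCS : measurable (C `&` S) by exact: measurableI.
pose b := Num.min (c 0%N) (mr (C `&` S)).
have [B [mB BCS Bb]] : exists B, [/\ measurable B, B `<=` C `&` S & mr B = b].
  apply: atomless_ivt => //.
    by rewrite le_min c_ge0 fmeasure_ge0.
  by rewrite ge_min lexx orbT.
have mSB : measurable (S `\` B) by exact: measurableD.
have CSB_le : mr (C `&` (S `\` B)) <= \sum_(i < k.+1) c (bump 0 i).
  rewrite setIDA fmeasureD// Bb.
  have : 0 <= \sum_(i < k.+1) c (bump 0 i) by exact: sumr_ge0.
  have [cCS|CSc] := leP (c 0%N) (mr (C `&` S)).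
    by rewrite /b (min_l cCS); lra.
  by rewrite /b (min_r (ltW CSc)); lra.
have [A' [mA' A'S dA' cA' bA']] :=
  IH (fun i => c (bump 0 i)) _ mSB (fun i => c_ge0 _) CSB_le.
exists (fun i => if i is i'.+1 then A' i' else B); split.
- by move=> [|i].
- by move=> [|i] w /=; [move/BCS => []|move/A'S => []].
- move=> [|i] [|j] //= ik jk ij.
  + by apply/seteqP; split => // w [Bw /A'S [] _].
  + by apply/seteqP; split => // w [/A'S [] _ ?].
  + exact: dA'.
- move=> w Sw; have [Bw|Bw] := pselect (B w); first by exists 0%N.
  by have [i ik A'w] := cA' w (conj Sw Bw); exists i.+1.
- move=> [|i] ik /=; last exact: bA'.
  rewrite (setIidr (subset_trans BCS (@subIsetl _ _ _))) Bb.
  by rewrite /b ge_min lexx.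
Qed.

Lemma atomless_partition n C (c : 'I_n.+1 -> R) : measurable C ->
  (forall i, 0 <= c i) -> mr C <= \sum_(i < n.+1) c i ->
  exists A : 'I_n.+1 -> set T, partition_n A /\ forall i, mr (C `&` A i) <= c i.
Proof.
move=> mC c_ge0 C_le.
pose cn k := c (inord k).
have CT_le : mr (C `&` setT) <= \sum_(i < n.+1) cn i.
  by rewrite setIT /cn; under eq_bigr do rewrite inord_val.
have [A [mA _ dA cA bA]] :=
  atomless_split_nat mC measurableT (fun i => c_ge0 (inord i)) CT_le.
exists (fun i => A i); split; first split.
- by move=> i.
- move=> i j ij; apply: dA; [exact: (ltn_ord i)|exact: (ltn_ord j)|].
  by apply: contraNN ij => /eqP /val_inj ->.
- apply/seteqP; split => // w _; have [i ik Aiw] := cA w I.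
  by exists (inord i) => //; rewrite /= inordK.
- by move=> i; have := bA _ (ltn_ord i); rewrite /cn inord_val.
Qed.

End atomless.
End finite_measure.

Section density_measure.
Context d (T : measurableType d) (R : realType).
Context (mu : {measure set T -> \bar R}).
Variable f : T -> R.

Definition density_measure of measurable_fun setT f & (forall w, 0 <= f w) :=
  fun A => (\int[mu]_(w in A) (f w)%:E)%E.

Hypotheses (mf : measurable_fun setT f) (f_ge0 : forall w, 0 <= f w).
Local Notation nu := (density_measure mf f_ge0).

Let nu0 : nu set0 = 0%E.
Proof. exact: integral_set0. Qed.

Let nu_ge0 A : (0 <= nu A)%E.
Proof. by apply: integral_ge0 => w _; rewrite lee_fin. Qed.

Let nu_sigma_additive : semi_sigma_additive nu.
Proof.
by apply: semi_sigma_additive_nng_induced => //; exact/measurable_EFinP.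
Qed.

HB.instance Definition _ :=
  isMeasure.Build _ _ _ nu nu0 nu_ge0 nu_sigma_additive.

Lemma density_measureE A : nu A = (\int[mu]_(w in A) (f w)%:E)%E.
Proof. by []. Qed.

Lemma density_measure_gt0 A : measurable A -> (forall w, A w -> 0 < f w) ->
  (0 < mu A)%E -> (0 < nu A)%E.
Proof.
move=> mA f_gt0 muA_gt0; rewrite lt0e measure_ge0 andbT; apply/eqP => nuA0.
have mfA : measurable_fun A (fun w => (f w)%:E).
  by apply: measurable_funTS; exact/measurable_EFinP.
have : (\int[mu]_(w in A) `|(f w)%:E| = 0)%E.
  by rewrite -nuA0; apply: eq_integral => w _; rewrite gee0_abs// lee_fin.
move=> /(ae_eq_integral_abs mu mA mfA).1 [N [mN muN0 AN]].
suff : (mu A <= mu N)%E by rewrite muN0 leNgt muA_gt0.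
apply: le_measure; rewrite ?inE// => w Aw; apply: AN => /= /(_ Aw) /eqP.
by rewrite eqe gt_eqF// f_gt0.
Qed.

Lemma density_measure_atomless :
  (nu setT < +oo)%E -> atomless_measure mu -> atomless_measure nu.
Proof.
move=> nu_fin mu_atomless A mA nuA_gt0.
have mf_gt0 : measurable [set w | 0 < f w] := measurable_superlevel 0 mf.
pose A' := A `&` [set w | 0 < f w].
have mA' : measurable A' := measurableI _ _ mA mf_gt0.
have nuA' : nu A = nu A'.
  rewrite (measureDI nu mA mf_gt0) -/A'.
  rewrite [X in (X + _)%E](_ : _ = 0%E) ?add0e//.
  apply: integral0_eq => w [_ /negP]; rewrite -leNgt => fw.
  by apply/eqP; rewrite eqe eq_le fw f_ge0.
have muA'_gt0 : (0 < mu A')%E.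
  rewrite lt0e measure_ge0 andbT; apply: contraTneq nuA_gt0 => muA'0.
  rewrite nuA' density_measureE null_set_integral ?ltxx//.
  by apply: measurable_funTS; exact/measurable_EFinP.
have [B [mB BA' /andP[muB_gt0 muBA']]] := mu_atomless _ mA' muA'_gt0.
have nuB_gt0 : (0 < nu B)%E by apply: density_measure_gt0 => // w /BA' [].
have nuA'B_gt0 : (0 < nu (A' `\` B))%E.
  apply: density_measure_gt0; [exact: measurableD|by move=> w [[]]|].
  rewrite lt0e measure_ge0 andbT; apply: contraTneq muBA' => muA'B0.
  by rewrite (measureDI_sub mu mA' mB BA') muA'B0 add0e ltxx.
exists B; split => //; first exact: subset_trans BA' (@subIsetl _ _ _).
rewrite nuB_gt0 nuA' (measureDI_sub nu mA' mB BA') lteDr//.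
by rewrite ge0_fin_numE// (le_lt_trans _ nu_fin)// le_measure ?inE.
Qed.

Definition density_probability of (\int[mu]_w (f w)%:E = 1)%E := nu.

Variable f1 : (\int[mu]_w (f w)%:E = 1)%E.

HB.instance Definition _ := Measure.on (density_probability f1).
HB.instance Definition _ :=
  @Measure_isProbability.Build _ _ R (density_probability f1) f1.

End density_measure.

Lemma sum_le_Lbar (R : realType) n (L : 'I_n -> R -> R) :
  (forall i, HI (L i)) ->
  forall y : 'I_n -> R, \sum_(i < n) L i (y i) <= Lbar L (\sum_(i < n) y i).
Proof.
move=> HL y; apply: sup_upper_bound; last by exists y.
split; first by exists (\sum_(i < n) L i (y i)), y.
exists n%:R => _ [y' [_ ->]].
rewrite -[n in n%:R]card_ord -sumr_const; apply: ler_sum => i _.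
by case: (HL i) => _ /(_ (y' i)) /andP[_ /ltW].
Qed.

Lemma Lbar_nondecreasing (R : realType) n (L : 'I_n.+1 -> R -> R) :
  (forall i, HI (L i)) -> attainable L -> {homo Lbar L : x x' / x <= x'}.
Proof.
(* move the increment onto the first coordinate of an optimal split of x *)
move=> HL L_att x x' xx'; have [y [y_sum y_opt]] := L_att x.
pose y' i := y i + (if i == ord0 then x' - x else 0).
have y'_sum : \sum_(i < n.+1) y' i = x'.
  rewrite big_split /= y_sum (bigD1 ord0)//= ?eqxx big1 ?addr0.
    by rewrite addrC subrK.
  by move=> i /negbTE ->.
rewrite -y_opt -y'_sum; apply: le_trans (sum_le_Lbar HL y').
apply: ler_sum => i _; case: (HL i) => L_nd _; apply: L_nd.
by rewrite /y' lerDl; case: ifP => _; rewrite ?subr_ge0.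
Qed.

Section weighted_tail.
Context d (T : measurableType d) (R : realType).
Context (P : probability T R) (Y : T -> R).
Hypotheses (mY : measurable_fun setT Y) (Y_ge0 : forall w, 0 <= Y w).
Hypothesis EY_fin : (\int[P]_w (Y w)%:E < +oo)%E.
Hypothesis EY_gt1 : (1 < \int[P]_w (Y w)%:E)%E.
Local Notation nu := (density_measure P mY Y_ge0 : {measure set T -> \bar R}).

Let nu_fin : (nu setT < +oo)%E.
Proof. exact: EY_fin. Qed.

Let nu_gt1 : 1 < fmeasure nu setT.
Proof. by rewrite -lte_fin -(fmeasureE nu_fin). Qed.

Let mYE : measurable_fun setT (fun w => (Y w)%:E).
Proof. exact/measurable_EFinP. Qed.

Lemma PY_le_density (Q : probability T R) (A : set T) :
  PY P Y Q -> measurable A -> (Q A <= nu A)%E.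
Proof.
move=> [q [mq q_bd QE]] mA; rewrite QE//.
apply: ge0_le_integral => //.
- by move=> w _; rewrite lee_fin; case/andP: (q_bd w).
- by apply: measurable_funTS; exact/measurable_EFinP.
- exact: measurable_funTS mYE.
- by move=> w _; rewrite lee_fin; case/andP: (q_bd w).
Qed.

Let integral_scaled D c : measurable D -> 0 <= c ->
  (\int[P]_(w in D) (c * Y w)%:E = (c * fmeasure nu D)%:E)%E.
Proof.
move=> mD c_ge0; under eq_integral do rewrite EFinM.
rewrite ge0_integralZl_EFin//; last exact: measurable_funTS mYE.
  by rewrite -density_measureE (fmeasureE nu_fin).
by move=> w _; rewrite lee_fin.
Qed.

(* Q has density (al 1_B + be 1_{~B}) Y, which lies between 0 and Y. *)
Lemma PY_mix (B : set T) (al be : R) :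
  measurable B -> 0 <= al <= 1 -> 0 <= be <= 1 ->
  al * fmeasure nu B + be * (fmeasure nu setT - fmeasure nu B) = 1 ->
  exists Q : probability T R, PY P Y Q /\ Q B = (al * fmeasure nu B)%:E.
Proof.
move=> mB /andP[al_ge0 al_le1] /andP[be_ge0 be_le1] mass1.
pose q w := (al * \1_B w + be * \1_(~` B) w) * Y w.
have mq : measurable_fun setT q.
  apply: measurable_funM => //; apply: measurable_funD.
    by apply: measurable_funM => //; exact: measurable_indic.
  by apply: measurable_funM => //; apply: measurable_indic; exact: measurableC.
have qB w : B w -> q w = al * Y w.
  move=> Bw; rewrite /q !indicE (mem_set Bw) memNset; last by move/(_ Bw).
  by rewrite mulr1 mulr0 addr0.
have qC w : ~ B w -> q w = be * Y w.
  move=> Bw; rewrite /q !indicE (memNset Bw) (@mem_set _ (~` B) w Bw).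
  by rewrite mulr1 mulr0 add0r.
have q_bd w : 0 <= q w <= Y w.
  by have [/qB|/qC] := pselect (B w) => ->; rewrite mulr_ge0//= ler_piMl.
have q_ge0 w : 0 <= q w by case/andP: (q_bd w).
have intB : (\int[P]_(w in B) (q w)%:E = (al * fmeasure nu B)%:E)%E.
  by rewrite -integral_scaled//; apply: eq_integral => w /set_mem /qB ->.
have intC : (\int[P]_(w in ~` B) (q w)%:E =
    (be * (fmeasure nu setT - fmeasure nu B))%:E)%E.
  rewrite -(fmeasureD nu_fin measurableT mB (subsetT B)) setTD.
  rewrite -integral_scaled//; last exact: measurableC.
  by apply: eq_integral => w /set_mem /qC ->.
have q1 : (\int[P]_w (q w)%:E = 1)%E.
  rewrite -(setUv B) ge0_integral_setU//.
    by rewrite intB intC -EFinD mass1.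
  - exact: measurableC.
  - by rewrite setUv; exact/measurable_EFinP.
  - by move=> w _; rewrite lee_fin.
  - by rewrite /disj_set setICr.
exists (density_probability mq q_ge0 q1); split; last exact: intB.
by exists q; split.
Qed.

Lemma PY_mass_gt (B : set T) (c : R) :
  measurable B -> c < 1 -> (c%:E < nu B)%E ->
  exists Q : probability T R, PY P Y Q /\ (c%:E < Q B)%E.
Proof.
move=> mB c_lt1; rewrite (fmeasureE nu_fin mB) lte_fin => c_lt.
have b_ge0 : 0 <= fmeasure nu B by exact: fmeasure_ge0.
(* if nu B >= 1, take density Y / nu B on B; otherwise density Y on B and the
   remaining mass spread proportionally to Y outside B *)
have [b_ge1|b_lt1] := leP 1 (fmeasure nu B).
  have b_gt0 : 0 < fmeasure nu B := lt_le_trans ltr01 b_ge1.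
  have al_01 : 0 <= (fmeasure nu B)^-1 <= 1.
    by rewrite invr_ge0 b_ge0 invf_le1.
  have be_01 : (0:R) <= (0:R) <= (1:R) by rewrite lexx ler01.
  have [|Q [PY_Q QB]] := PY_mix mB al_01 be_01.
    by rewrite mul0r addr0 mulVf// gt_eqF.
  by exists Q; split => //; rewrite QB mulVf ?gt_eqF// lte_fin.
have rest_gt0 : 0 < fmeasure nu setT - fmeasure nu B.
  by rewrite subr_gt0 (lt_trans b_lt1 nu_gt1).
have al_01 : (0:R) <= (1:R) <= (1:R) by rewrite ler01 lexx.
have be_01 :
    0 <= (1 - fmeasure nu B) / (fmeasure nu setT - fmeasure nu B) <= 1.
  rewrite divr_ge0 ?(ltW rest_gt0) ?subr_ge0 ?(ltW b_lt1)//=.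
  by rewrite ler_pdivrMr// mul1r lerD2r ltW.
have [|Q [PY_Q QB]] := PY_mix mB al_01 be_01.
  by rewrite mul1r -mulrA mulVf ?gt_eqF// mulr1 addrC subrK.
by exists Q; split => //; rewrite QB mul1r lte_fin.
Qed.

Lemma tail_le_of_rhoY_lt (L : R -> R) (X : T -> R) (t : R) :
  HI L -> measurable_fun setT X ->
  (rhoY L P Y X < t%:E)%E -> (nu [set w | (t < X w)%R] <= (L t)%:E)%E.
Proof.
move=> [L_nd L_bd] mX rho_lt; rewrite leNgt; apply/negP => L_lt.
have /andP[_ Lt_lt1] := L_bd t.
have [Q [PY_Q Q_gt]] := PY_mass_gt (measurable_superlevel t mX) Lt_lt1 L_lt.
have : (LVaR L Q X < t%:E)%E.
  by apply: le_lt_trans rho_lt; apply: ereal_sup_ubound; exists Q.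
move=> /ereal_inf_lt [_ [x Qx <-]]; rewrite lte_fin => xt.
suff : (Q [set w | (t < X w)%R] <= (L t)%:E)%E by rewrite leNgt Q_gt.
apply: le_trans (le_trans Qx _); last by rewrite lee_fin L_nd// ltW.
apply: le_measure; rewrite ?inE; try exact: measurable_superlevel _ mX.
by move=> w /= /(lt_trans xt).
Qed.

Lemma rhoY_shift_le (L : R -> R) (X : T -> R) (A : set T) (x y : R) :
  measurable_fun setT X -> measurable A ->
  (nu ([set w | (x < X w)%R] `&` A) <= (L y)%:E)%E ->
  (rhoY L P Y (fun w => ((X w - x) * \1_A w + y)%R) <= y%:E)%E.
Proof.
move=> mX mA nu_le; apply/ereal_supP => _ [Q PY_Q <-].
apply: ereal_inf_lbound; exists y => //=.
have -> : [set w | y < (X w - x) * \1_A w + y] = [set w | x < X w] `&` A.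
  apply/seteqP; split => w /=; rewrite ltrDr indicE.
    have [/set_mem Aw|_] := boolP (w \in A); last by rewrite mulr0 ltxx.
    by rewrite mulr1 subr_gt0.
  by move=> [xw Aw]; rewrite mem_set// mulr1 subr_gt0.
apply: le_trans nu_le; apply: PY_le_density => //.
exact: measurableI (measurable_superlevel x mX) mA.
Qed.

Lemma rhoY_gtNy (L : R -> R) (X : T -> R) :
  HI L -> measurable_fun setT X -> (-oo < rhoY L P Y X)%E.
Proof.
move=> HL mX; rewrite ltNge; apply/negP => rho_Ny.
have [L_nd L_bd] := HL.
have tail_le t : (nu [set w | (t < X w)%R] <= (L t)%:E)%E.
  by apply: tail_le_of_rhoY_lt => //; rewrite (le_lt_trans rho_Ny)// ltNye.
(* the superlevel sets of X exhaust T, whose nu-mass exceeds 1 > L 0 *)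
have : (nu (\bigcup_k [set w | (- k%:R < X w)%R]) <= (L 0)%:E)%E.
  apply: nondecreasing_bigcup_le => [k|i j ij|k].
  - exact: measurable_superlevel.
  - by rewrite subsetEset => w /=; apply: le_lt_trans; rewrite lerN2 ler_nat.
  - by apply: le_trans (tail_le _) _; rewrite lee_fin L_nd// oppr_le0.
rewrite [U in nu U](_ : _ = setT); last first.
  apply/seteqP; split => // w _; exists (truncn (- X w)).+1 => //=.
  by rewrite ltrNl; exact: truncnS_gt.
rewrite (fmeasureE nu_fin)// lee_fin; have /andP[_ L0_lt1] := L_bd 0.
by have := nu_gt1; lra.
Qed.

Lemma rhsVaR_le_sum_thresholds n (L : 'I_n -> R -> R) (X : T -> R)
    (Xi : 'I_n -> T -> R) (t : 'I_n -> R) :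
  (forall i, HI (L i)) -> (forall i, measurable_fun setT (Xi i)) ->
  (forall w, \sum_(i < n) Xi i w = X w) -> measurable_fun setT X ->
  (forall i, rhoY (L i) P Y (Xi i) < (t i)%:E)%E ->
  (rhsVaR P Y X (Lbar L) <= (\sum_(i < n) t i)%:E)%E.
Proof.
move=> HL mXi XE mX rho_lt.
apply: ereal_inf_lbound; exists (\sum_(i < n) t i) => //=.
have cover : [set w | \sum_(i < n) t i < X w] `<=`
               \bigcup_i [set w | t i < Xi i w].
  move=> w /=; rewrite -XE => sum_lt; apply: contrapT => none.
  move: sum_lt; rewrite ltNge => /negP; apply; apply: ler_sum => i _.
  by rewrite leNgt; apply/negP => ti; apply: none; exists i.
apply: le_trans (measure_le_sum_cover nu (measurable_superlevel _ mX)
  (fun i => measurable_superlevel _ (mXi i)) cover) _.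
apply: (@le_trans _ _ (\sum_(i < n) (L i (t i))%:E)%E).
  by apply: lee_sum => i _; exact: tail_le_of_rhoY_lt.
by rewrite sumEFin lee_fin sum_le_Lbar.
Qed.

Lemma rhsVaR_le_sum_rhoY n (L : 'I_n.+1 -> R -> R) (X : T -> R)
    (Xi : 'I_n.+1 -> T -> R) :
  (forall i, HI (L i)) -> (forall i, measurable_fun setT (Xi i)) ->
  (forall w, \sum_(i < n.+1) Xi i w = X w) -> measurable_fun setT X ->
  (rhsVaR P Y X (Lbar L) <= \sum_(i < n.+1) rhoY (L i) P Y (Xi i))%E.
Proof.
move=> HL mXi XE mX.
have rho_gtNy i : (-oo < rhoY (L i) P Y (Xi i))%E by exact: rhoY_gtNy.
have [[j rho_j]|rho_lty] := pselect (exists i, rhoY (L i) P Y (Xi i) = +oo%E).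
  suff -> : (\sum_(i < n.+1) rhoY (L i) P Y (Xi i) = +oo)%E by rewrite leey.
  apply/esum_eqyP; last by exists j; split => //; rewrite mem_index_enum.
  by move=> i _; rewrite gt_eqF.
have rho_fin i : rhoY (L i) P Y (Xi i) \is a fin_num.
  rewrite fin_numE gt_eqF//= lt_eqF// ltey; apply/negP => /eqP rho_i.
  by apply: rho_lty; exists i.
pose z i := fine (rhoY (L i) P Y (Xi i)).
have -> : (\sum_(i < n.+1) rhoY (L i) P Y (Xi i) = (\sum_(i < n.+1) z i)%:E)%E.
  by rewrite -sumEFin; apply: eq_bigr => i _; rewrite /z fineK.
apply/lee_addgt0Pr => e e_gt0.
pose t i := z i + e / n.+1%:R.
have t_sum : \sum_(i < n.+1) t i = \sum_(i < n.+1) z i + e.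
  rewrite big_split /= sumr_const card_ord -[X in _ + X]mulr_natr.
  by rewrite divfK// pnatr_eq0.
rewrite -EFinD -t_sum; apply: rhsVaR_le_sum_thresholds => // i.
by rewrite -(fineK (rho_fin i)) lte_fin ltrDl divr_gt0.
Qed.

Section allocation.
Hypothesis P_atomless : atomless P.
Variables (n : nat) (L : 'I_n.+1 -> R -> R).
Hypotheses (HL : forall i, HI (L i)) (L_att : attainable L).
Variable Xs : set (T -> R).
Hypothesis Xs_adm : admissible_class Xs.
Variable X : T -> R.
Hypothesis XsX : Xs X.

Let mX : measurable_fun setT X.
Proof. by case: Xs_adm => + _ _ _ _; apply. Qed.

Lemma exists_tail_partition x :
  (\int[P]_(w in [set w | (x < X w)%R]) (Y w)%:E <= (Lbar L x)%:E)%E ->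
  exists ys A, [/\ \sum_(i < n.+1) ys i = x,
    \sum_(i < n.+1) L i (ys i) = Lbar L x, partition_n A &
    forall i, (\int[P]_(w in [set w | (x < X w)%R] `&` A i) (Y w)%:E
                <= (L i (ys i))%:E)%E].
Proof.
move=> tail_le; have [y [y_sum y_opt]] := L_att x.
have mC : measurable [set w | x < X w] := measurable_superlevel x mX.
have L_ge0 i : 0 <= L i (y i) by case: (HL i) => _ /(_ (y i)) /andP[/ltW].
have nu_atomless : atomless_measure nu :=
  density_measure_atomless nu_fin P_atomless.
have C_le : fmeasure nu [set w | x < X w] <= \sum_(i < n.+1) L i (y i).
  by rewrite y_opt -lee_fin -(fmeasureE nu_fin mC).
have [A [A_part A_le]] := atomless_partition nu_fin nu_atomless mC L_ge0 C_le.
exists y, A; split => // i; have [mA _ _] := A_part.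
change (nu ([set w | (x < X w)%R] `&` A i) <= (L i (y i))%:E)%E.
by rewrite (fmeasureE nu_fin (measurableI _ _ mC (mA i))) lee_fin.
Qed.

Lemma allocation_shift x (ys : 'I_n.+1 -> R) (A : 'I_n.+1 -> set T) :
  \sum_(i < n.+1) ys i = x -> partition_n A ->
  allocation Xs X (fun i w => (X w - x) * \1_(A i) w + ys i).
Proof.
move=> ys_sum A_part; have [mA _ _] := A_part.
case: Xs_adm => _ Xs_cst Xs_add Xs_sub Xs_indic; split.
  move=> i; apply: Xs_add (Xs_cst _); apply: Xs_indic (mA i).
  exact: Xs_sub XsX (Xs_cst x).
move=> w; rewrite big_split /= -mulr_sumr sum_indic_partition// mulr1.
by rewrite ys_sum subrK.
Qed.

Lemma sum_rhoY_shift_le x (ys : 'I_n.+1 -> R) (A : 'I_n.+1 -> set T) :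
  \sum_(i < n.+1) ys i = x -> partition_n A ->
  (forall i, (\int[P]_(w in [set w | (x < X w)%R] `&` A i) (Y w)%:E
                <= (L i (ys i))%:E)%E) ->
  (\sum_(i < n.+1) rhoY (L i) P Y (fun w => ((X w - x) * \1_(A i) w + ys i)%R)
     <= x%:E)%E.
Proof.
move=> ys_sum [mA _ _] A_le.
have -> : x%:E = (\sum_(i < n.+1) (ys i)%:E)%E by rewrite sumEFin ys_sum.
by apply: lee_sum => i _; exact: rhoY_shift_le mX (mA i) (A_le i).
Qed.

Lemma infconv_rhoY :
  infconv Xs (fun i => rhoY (L i) P Y) X = rhsVaR P Y X (Lbar L).
Proof.
apply/le_anti/andP; split.
  apply/ereal_infP => _ [x tail_le <-].
  have [ys [A [ys_sum _ A_part A_le]]] := exists_tail_partition tail_le.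
  apply: le_trans (sum_rhoY_shift_le ys_sum A_part A_le).
  apply: ereal_inf_lbound.
  exists (fun i w => (X w - x) * \1_(A i) w + ys i) => //.
  exact: allocation_shift.
apply/ereal_infP => _ [Xi [Xs_Xi Xi_sum] <-].
apply: rhsVaR_le_sum_rhoY => // i.
by case: Xs_adm => + _ _ _ _; apply.
Qed.

Lemma rhsVaR_attained xs : rhsVaR P Y X (Lbar L) = xs%:E ->
  Lbar L x @[x --> xs^'+] --> Lbar L xs ->
  (\int[P]_(w in [set w | (xs < X w)%R]) (Y w)%:E <= (Lbar L xs)%:E)%E.
Proof.
move=> rhs_xs Lbar_rc.
have tail_le s : xs < s -> (nu [set w | (s < X w)%R] <= (Lbar L s)%:E)%E.
  move=> xs_s.
  have : (rhsVaR P Y X (Lbar L) < s%:E)%E by rewrite rhs_xs lte_fin.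
  move=> /ereal_inf_lt [_ [s0 tail_s0 <-]]; rewrite lte_fin => s0_s.
  apply: le_trans (le_trans tail_s0 _).
    apply: le_measure; rewrite ?inE; try exact: measurable_superlevel _ mX.
    by move=> w /= /(lt_trans s0_s).
  by rewrite lee_fin Lbar_nondecreasing// ltW.
apply/lee_addgt0Pr => e e_gt0.
have [dl dl_gt0 Lbar_near] : exists2 dl, 0 < dl &
    forall s, xs < s < xs + dl -> Lbar L s <= Lbar L xs + e.
  move: Lbar_rc => /cvgrPdist_lt /(_ e e_gt0).
  rewrite near_withinE /= => /nbhs_ballP [dl /= dl_gt0 near_xs].
  exists dl => // s /andP[xs_s s_lt].
  have : `|Lbar L xs - Lbar L s| < e.
    apply: near_xs => //; rewrite /ball /= ltr_distlC s_lt andbT ltrBlDr.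
    by apply: lt_trans xs_s _; rewrite ltrDl.
  by rewrite ltr_distlC => /andP[_ /ltW].
(* the thresholds xs + dl / (k + 2) lie in ]xs, xs + dl[ and decrease to xs *)
pose F k := [set w | xs + dl / k.+2%:R < X w].
have F_cover : \bigcup_k F k = [set w | xs < X w].
  apply/seteqP; split => w /=.
    by move=> [k _ Fw]; apply: le_lt_trans Fw; rewrite lerDl divr_ge0// ltW.
  move=> xs_w; exists (truncn (dl / (X w - xs))) => //; rewrite /F /=.
  suff : dl / (truncn (dl / (X w - xs))).+2%:R < X w - xs by rewrite ltrBrDl.
  rewrite ltr_pdivrMr// mulrC -ltr_pdivrMr ?subr_gt0//.
  by apply: lt_trans (truncnS_gt _) _; rewrite ltr_nat.
change (nu [set w | (xs < X w)%R] <= (Lbar L xs + e)%:E)%E.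
rewrite -F_cover; apply: nondecreasing_bigcup_le => [k|i j ij|k].
- exact: measurable_superlevel.
- rewrite subsetEset => w; rewrite /F /=; apply: le_lt_trans.
  by rewrite lerD2l ler_pM2l// lef_pV2 ?posrE// ler_nat.
- have s_gt : xs < xs + dl / k.+2%:R by rewrite ltrDl divr_gt0.
  apply: le_trans (tail_le _ s_gt) _; rewrite lee_fin; apply: Lbar_near.
  by rewrite s_gt ltrD2l ltr_pdivrMr// ltr_pMr// ltr1n.
Qed.

End allocation.
End weighted_tail.

Unset Implicit Arguments.

Theorem mainTheorem16 (d : measure_display) (T : measurableType d)
  (R : realType) (P : probability T R) (n : nat) (L : 'I_n -> R -> R)
  (Y : T -> R) (Xs : set (T -> R)) :
  (0 < n)%N ->
  (forall i, HI (L i)) ->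
  atomless P ->
  measurable_fun setT Y -> (forall w, 0 <= Y w) ->
  (1 < \int[P]_w (Y w)%:E < +oo)%E ->
  admissible_class Xs ->
  attainable L ->
  forall X : T -> R, Xs X ->
    infconv Xs (fun i => rhoY (L i) P Y) X = rhsVaR P Y X (Lbar L) /\
    forall xs : R, rhsVaR P Y X (Lbar L) = xs%:E ->
      Lbar L x @[x --> xs^'+] --> Lbar L xs ->
      let conds (ys : 'I_n -> R) (A : 'I_n -> set T) :=
        [/\ \sum_(i < n) ys i = xs,
            \sum_(i < n) L i (ys i) = Lbar L xs,
            partition_n A &
            forall i, (\int[P]_(w in [set w | (xs < X w)%R] `&` A i) (Y w)%:E
                         <= (L i (ys i))%:E)%E] in
      (exists ys A, conds ys A) /\
      forall ys A, conds ys A ->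
        optimal_allocation Xs (fun i => rhoY (L i) P Y) X
          (fun i w => (X w - xs) * \1_(A i) w + ys i).
Proof.
move=> n_gt0 HL P_atomless mY Y_ge0 /andP[EY_gt1 EY_fin] Xs_adm L_att X XsX.
case: n n_gt0 L HL L_att => // n _ L HL L_att.
have infconvE :=
  infconv_rhoY mY Y_ge0 EY_fin EY_gt1 P_atomless HL L_att Xs_adm XsX.
split => // xs rhs_xs Lbar_rc conds; split.
  have tail_xs := rhsVaR_attained mY Y_ge0 HL L_att Xs_adm XsX rhs_xs Lbar_rc.
  have := exists_tail_partition mY Y_ge0 EY_fin P_atomless HL L_att Xs_adm XsX.
  by move=> /(_ _ tail_xs) [ys [A ?]]; exists ys, A.
move=> ys A [ys_sum _ A_part A_le].
have alloc := allocation_shift Xs_adm XsX ys_sum A_part.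
have shift_le := sum_rhoY_shift_le mY Y_ge0 Xs_adm XsX ys_sum A_part A_le.
split => //; apply/le_anti/andP; split; first by rewrite infconvE rhs_xs.
by apply: ereal_inf_lbound; exists (fun i w => (X w - xs) * \1_(A i) w + ys i).
Qed.
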